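(* Let $X=(x_1,\ldots,x_n)$ and $Y=(y_1,\ldots,y_n)$ be two sequences of real numbers and let $p\in\{1,\dots,n\}$. Then for all $S\subseteq \{1,\dots,n\}$, $$|\mathrm{top}_p(X)-\mathrm{top}_p(Y)| \leq p\max_{i\in S} |x_i-y_i|+\sum_{i\in \{1,\dots,n\}\setminus S} |x_i-y_i|,$$ where $\mathrm{top}_p(Z)$ denotes the sum of the $p$ largest numbers in the sequence $Z$ (counted with multiplicity).
   Context: The maximum over an empty index set is interpreted as $0$. *)

From mathcomp Require Import all_boot all_order all_algebra.
Set Implicit Arguments. Unset Strict Implicit. Unset Printing Implicit Defensive.
Import Order.TTheory GRing.Theory Num.Theory.
Local Open Scope ring_scope.

Definition top (R : realDomainType) (n p : nat) (Z : 'I_n -> R) : R :=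
  \sum_(z <- take p (sort (fun a b : R => b <= a) [seq Z i | i <- enum 'I_n])) z.

(* maximum over an index set; the maximum over the empty set is 0 *)
Definition maxS (R : realDomainType) (n : nat) (S : {set 'I_n}) (f : 'I_n -> R) : R :=
  \big[Num.max/0]_(i in S) f i.

From mathcomp Require Import all_boot all_order all_algebra.
Import Order.TTheory GRing.Theory Num.Theory.
Local Open Scope ring_scope.

(* top_p X is the largest sum of X over a p-element index set, attained at the
   set T of the indices of the p largest entries of X. Hence
   top_p X - top_p Y <= sum_(i in T) (X i - Y i) <= sum_(i in T) |X i - Y i|,
   and the at most p terms of the last sum with i in S are each bounded by the
   maximum over S. Exchanging X and Y bounds the absolute value. *)

Lemma ler_sum_card_dominated (T : finType) (R : numDomainType) (f : T -> R)
    (A B : {set T}) :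
  #|B| = #|A| -> (forall a b, a \in A -> b \in B -> f b <= f a) ->
  \sum_(b in B) f b <= \sum_(a in A) f a.
Proof.
move=> cardBA dom; have [A0 | A_gt0] := posnP #|A|.
  move: (A0); rewrite -cardBA => /eqP; rewrite cards_eq0 => /eqP ->.
  by move/eqP: A0; rewrite cards_eq0 => /eqP ->; rewrite !big_set0.
(* Scaled by #|A| = #|B|, both sides are sums over B x A, compared termwise. *)
rewrite -(@ler_pM2l _ #|A|%:R) ?ltr0n // !mulr_sumr.
under eq_bigr do rewrite mulr_natl -sumr_const.
under [X in _ <= X]eq_bigr do rewrite mulr_natl -cardBA -sumr_const.
rewrite [X in _ <= X]exchange_big /=.
by apply: ler_sum => b bB; apply: ler_sum => a aA; exact: dom.
Qed.

Section MaxS.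
Variables (R : realDomainType) (n : nat) (S : {set 'I_n}) (f : 'I_n -> R).

Lemma maxS_ge0 : (forall i, 0 <= f i) -> 0 <= maxS S f.
Proof.
move=> f_ge0; apply: (big_ind (fun x => 0 <= x)) => // x y x_ge0 _.
by rewrite le_max x_ge0.
Qed.

Lemma le_maxS i : i \in S -> f i <= maxS S f.
Proof. by move=> iS; rewrite /maxS (bigD1 i iS) /= le_max lexx. Qed.

Lemma sum_le_card_maxS_add_setC (T : {set 'I_n}) :
  (forall i, 0 <= f i) ->
  \sum_(i in T) f i <= #|T|%:R * maxS S f + \sum_(i in ~: S) f i.
Proof.
move=> f_ge0; rewrite (big_setID (A := T) S) /=; apply: lerD.
  apply: (@le_trans _ _ (\sum_(i in T :&: S) maxS S f)).
    by apply: ler_sum => i; rewrite inE => /andP[_ iS]; exact: le_maxS.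
  rewrite sumr_const -(mulr_natl (maxS S f)).
  apply: ler_wpM2r; first exact: maxS_ge0.
  by rewrite ler_nat; exact/subset_leq_card/subsetIl.
rewrite [X in _ <= X](big_setID (A := ~: S) T) /= setDE setIC lerDl.
exact: sumr_ge0.
Qed.

End MaxS.

Section Top.
Variables (R : realDomainType) (n : nat).
Implicit Types (X Y : 'I_n -> R) (p : nat).

Definition desc_enum X := sort (fun i j : 'I_n => X j <= X i) (enum 'I_n).

Definition top_set p X : {set 'I_n} := [set i in take p (desc_enum X)].

Lemma desc_enum_uniq X : uniq (desc_enum X).
Proof. by rewrite sort_uniq enum_uniq. Qed.

Lemma top_setE p X : top p X = \sum_(i in top_set p X) X i.
Proof.
rewrite /top sort_map -map_take big_map big_uniq; last first.
  exact/take_uniq/desc_enum_uniq.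
by apply: eq_bigl => i; rewrite inE.
Qed.

Lemma card_top_set p X : (p <= n)%N -> #|top_set p X| = p.
Proof.
move=> le_pn; rewrite cardsE; move/card_uniqP: (take_uniq p (desc_enum_uniq X)).
by rewrite size_takel // size_sort size_enum_ord.
Qed.

Lemma top_set_dominates p X i j :
  i \in top_set p X -> j \notin top_set p X -> X j <= X i.
Proof.
have desc_trans : transitive (fun i j : 'I_n => X j <= X i).
  by move=> y x z Xyx Xzy; exact: le_trans Xzy Xyx.
have := sort_sorted (fun x y => le_total (X y) (X x)) (enum 'I_n).
rewrite (sorted_pairwise desc_trans) -/(desc_enum X).
rewrite -(cat_take_drop p (desc_enum X)) pairwise_cat.
case/and3P => /allrelP dom _ _.
rewrite !inE => i_take j_take; apply: dom => //.
have : j \in take p (desc_enum X) ++ drop p (desc_enum X).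
  by rewrite cat_take_drop mem_sort mem_enum.
by rewrite mem_cat (negbTE j_take).
Qed.

Lemma sum_le_top p X (T : {set 'I_n}) :
  #|T| = p -> \sum_(i in T) X i <= top p X.
Proof.
move=> cardT; have le_pn : (p <= n)%N.
  by rewrite -cardT -[X in (_ <= X)%N]card_ord max_card.
rewrite top_setE; set A := top_set p X.
rewrite (big_setID (A := T) A) (big_setID (A := A) T) setIC /= lerD2l.
apply: ler_sum_card_dominated => [|a b].
  by rewrite !cardsD setIC cardT card_top_set.
by rewrite !in_setD => /andP[_ aA] /andP[bA _]; exact: top_set_dominates aA bA.
Qed.

Lemma top_sub_le_sum_top_set p X Y : (p <= n)%N ->
  top p X - top p Y <= \sum_(i in top_set p X) `|X i - Y i|.
Proof.
move=> le_pn; rewrite [top p X]top_setE.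
apply: (@le_trans _ _ (\sum_(i in top_set p X) (X i - Y i))).
  by rewrite sumrB lerD2l lerN2 sum_le_top // card_top_set.
by apply: ler_sum => i _; exact: ler_norm.
Qed.

Lemma top_sub_le p X Y (S : {set 'I_n}) : (p <= n)%N ->
  top p X - top p Y <=
    p%:R * maxS S (fun i => `|X i - Y i|) + \sum_(i in ~: S) `|X i - Y i|.
Proof.
move=> le_pn; apply: le_trans (top_sub_le_sum_top_set p X Y le_pn) _.
rewrite -[in p%:R](card_top_set p X le_pn).
by apply: sum_le_card_maxS_add_setC => i.
Qed.

End Top.

Theorem lemma3p2 (R : realFieldType) (n p : nat) (X Y : 'I_n -> R)
  (hp1 : (1 <= p)%N) (hpn : (p <= n)%N) (S : {set 'I_n}) :
  `|top p X - top p Y| <=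
    p%:R * maxS S (fun i => `|X i - Y i|) + \sum_(i in ~: S) `|X i - Y i|.
Proof.
rewrite ler_norml lerNl opprB top_sub_le // andbT.
have -> : maxS S (fun i => `|X i - Y i|) = maxS S (fun i => `|Y i - X i|).
  by apply: eq_bigr => i _; rewrite distrC.
rewrite (eq_bigr (fun i => `|Y i - X i|)) => [|i _]; last exact: distrC.
exact: top_sub_le.
Qed.
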